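(* Let $k$ be a positive integer and let $G$ be a multigraph with $|E(G)|\ge 42k\log k$ and minimum degree $\delta(G)\ge 3$. Then $G$ contains $k$ edge-disjoint cycles.
   Context: Logarithms are to base $2$. Multigraphs may have parallel edges (two parallel edges form a cycle of length $2$). *)

From mathcomp Require Import all_boot.
From Stdlib Require Import Reals.
Set Implicit Arguments. Unset Strict Implicit. Unset Printing Implicit Defensive.

(* A finite multigraph: vertex type V, edge type E, each edge e has
   endpoints src e and dst e (parallel edges allowed since E is arbitrary). *)
Section MG.
Variables (V E : finType) (src dst : E -> V).

Definition incident (v : V) (e : E) : bool := (src e == v) || (dst e == v).

(* degree of v (graph is loopless, so each incident edge counts once) *)
Definition deg (v : V) : nat := #|[set e | incident v e]|.

Definition joins (e : E) (x y : V) : bool :=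
  ((src e == x) && (dst e == y)) || ((src e == y) && (dst e == x)).

Definition is_cycle (C : {set E}) : Prop :=
  exists (l : nat) (vs : 'I_l -> V) (es : 'I_l -> E),
    [/\ 2 <= l, injective vs, injective es,
        (forall i : 'I_l, joins (es i) (vs i) (vs (ordS i)))
      & C = [set es i | i : 'I_l]].
End MG.

Definition log2 (x : R) : R := (ln x / ln 2)%R.

(* Let the excess of an edge set F be |F| - |V(F)|, where V(F) is the set of
   vertices touched by F.  Deleting a pendant edge does not lower the excess, so
   we may work with pruned F (no vertex of degree 1); such an F with excess m
   has at most 2m branch vertices (vertices of degree at least 3).  Conversely,
   if every nonempty even subgraph of a pruned F passes through more than 2R
   branch vertices, the paths leaving a branch vertex and continuing through
   degree-2 vertices form a binary tree of depth R - 1 with distinct leaves, so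
   F has at least 2^(R-1) branch vertices (a Moore-type bound).  Hence once the
   excess m of F is trimmed to satisfy 2m < 2^(R-1), F contains a cycle through
   at most 2R branch vertices, and deleting it (then pruning) lowers the excess
   by at most 2R.  Minimum degree 3 gives an initial excess of at least |E|/3,
   and with R = 2 log k + 7 this step can be repeated k times. *)

From Pilot Require Import Defs.
From mathcomp Require Import all_boot zify.
Set Implicit Arguments. Unset Strict Implicit. Unset Printing Implicit Defensive.

Lemma imset_nth (T : finType) (s : seq T) x0 n : size s = n ->
  [set nth x0 s i | i : 'I_n] = [set y in s].
Proof.
move=> sz; apply/setP=> y; rewrite inE; apply/imsetP/idP => [[i _ ->]|ys].
  by rewrite mem_nth // sz.
have lt : index y s < n by rewrite -sz index_mem.
by exists (Ordinal lt); rewrite ?nth_index.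
Qed.

Lemma uniq_size_le_card (T : finType) (s : seq T) : uniq s -> size s <= #|T|.
Proof. by move=> us; rewrite -(card_uniqP us) max_card. Qed.

Lemma card_sum (T : finType) (A : {pred T}) : #|A| = \sum_x (x \in A).
Proof. by rewrite -sum1_card big_mkcond. Qed.

Lemma nth_pairwise_disjoint (T : finType) (P : {set T} -> Prop) (cs : seq {set T}) :
  {in cs, forall C, P C} -> pairwise (fun A B : {set T} => [disjoint A & B]) cs ->
  exists Cs : 'I_(size cs) -> {set T},
    (forall i, P (Cs i)) /\ (forall i j, i != j -> [disjoint Cs i & Cs j]).
Proof.
move=> hP /(pairwiseP set0) dis; exists (fun i => nth set0 cs i); split=> [i | i j].
  by apply/hP/mem_nth.
rewrite neq_ltn => /orP[] ij; first by apply: dis; rewrite ?inE.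
by rewrite disjoint_sym; apply: dis; rewrite ?inE.
Qed.

Lemma ltn_subS m k n : k < m -> m - k < n.+1 -> m - k.+1 < n.
Proof. lia. Qed.

Section Multigraph.
Variables (V E : finType) (src dst : E -> V).
Hypothesis loopless : forall e, src e != dst e.

Local Notation incident := (incident src dst).
Local Notation joins := (joins src dst).
Implicit Types (F A C D W : {set E}) (e : E) (u v x y z : V) (s t : seq (E * V)).

Lemma joins_sym e x y : joins e x y = joins e y x.
Proof. exact: orbC. Qed.

Lemma joins_incident e x y v : joins e x y -> incident v e = (v == x) || (v == y).
Proof.
rewrite /Defs.joins /Defs.incident.
by case/orP=> /andP[/eqP-> /eqP->]; rewrite ![_ == v]eq_sym // orbC.
Qed.

Lemma joins_neq e x y : joins e x y -> x != y.
Proof.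
by case/orP=> /andP[/eqP<- /eqP<-]; rewrite // eq_sym.
Qed.

Lemma incident_joins e x : incident x e -> exists y, joins e x y.
Proof.
by case/orP=> /eqP<-; [exists (dst e) | exists (src e)]; rewrite /Defs.joins !eqxx ?orbT.
Qed.

Definition sdeg (F : {set E}) v := #|[set e in F | incident v e]|.
Definition vset (F : {set E}) := [set v | 0 < sdeg F v].
Definition branch (F : {set E}) := [set v | 2 < sdeg F v].
Definition pruned (F : {set E}) := forall v, sdeg F v != 1.
Definition even_edges (W : {set E}) := [forall v, ~~ odd (sdeg W v)].
Definition two_regular (C : {set E}) := forall v, sdeg C v = 2 * (v \in vset C).

Lemma sdegE F v : sdeg F v = \sum_e ((e \in F) && incident v e).
Proof.
rewrite /sdeg -sum1_card big_mkcond /=; apply: eq_bigr => e _.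
by rewrite inE; case: (_ && _).
Qed.

Lemma sdeg0 v : sdeg set0 v = 0.
Proof. by rewrite sdegE big1 // => e _; rewrite inE. Qed.

Lemma sdegU1 e F v : e \notin F -> sdeg (e |: F) v = sdeg F v + incident v e.
Proof.
move=> eF; rewrite !sdegE [LHS](bigD1 e) // [X in _ = X + _](bigD1 e) //=.
rewrite !inE eqxx (negbTE eF) /= addnC; congr (_ + _); apply: eq_bigr => e' /negbTE ne'.
by rewrite !inE ne'.
Qed.

Lemma sdeg_setD F C v : C \subset F -> sdeg F v = sdeg C v + sdeg (F :\: C) v.
Proof.
move=> /subsetP CF; rewrite !sdegE -big_split /=; apply: eq_bigr => e _.
by rewrite inE; case eC: (e \in C); rewrite //= ?CF ?addn0.
Qed.

Lemma sdeg_set1 e v : sdeg [set e] v = incident v e.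
Proof.
rewrite sdegE (bigD1 e) ?inE //= eqxx big1 ?addn0 // => f /negbTE nf.
by rewrite inE nf.
Qed.

Lemma sdegS A D v : A \subset D -> sdeg A v <= sdeg D v.
Proof. by move=> AD; rewrite (sdeg_setD v AD) leq_addr. Qed.

Lemma vsetS A D : A \subset D -> vset A \subset vset D.
Proof.
by move=> AD; apply/subsetP=> v; rewrite !inE => /leq_trans; apply; apply: sdegS.
Qed.

Lemma sdeg_symdiff A D v :
  sdeg ((A :\: D) :|: (D :\: A)) v + 2 * sdeg (A :&: D) v = sdeg A v + sdeg D v.
Proof.
rewrite !sdegE big_distrr -!big_split /=; apply: eq_bigr => e _.
by rewrite !inE; case: (e \in A); case: (e \in D); case: (incident v e).
Qed.

Lemma sdeg_gt0 F x e : e \in F -> incident x e -> 0 < sdeg F x.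
Proof. by move=> eF ie; apply/card_gt0P; exists e; rewrite inE eF. Qed.

Lemma sdeg1_uniq F x e e' : sdeg F x = 1 -> e \in F -> incident x e ->
  e' \in F -> incident x e' -> e' = e.
Proof.
move=> d1 eF ie e'F ie'; apply/eqP; apply: contraT => ne.
have : [set e; e'] \subset [set f in F | incident x f].
  by apply/subsetP=> f; rewrite !inE => /orP[] /eqP->; rewrite ?eF ?e'F.
by move/subset_leq_card; rewrite cards2 eq_sym ne -/(sdeg F x) d1.
Qed.

Lemma pick_edge F x e0 : 2 <= sdeg F x ->
  exists e, [/\ e \in F, incident x e & e != e0].
Proof.
rewrite /sdeg (cardsD1 e0) => h.
have : 0 < #|[set e in F | incident x e] :\ e0| by move: h; case: (e0 \in _) => /= h; lia.
by case/card_gt0P=> e; rewrite !inE => /and3P[? ? ?]; exists e.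
Qed.

Lemma pick_edge2 F x e0 : 3 <= sdeg F x ->
  exists e1 e2, [/\ e1 \in F, incident x e1, e1 != e0, e2 \in F
                  & [/\ incident x e2, e2 != e0 & e2 != e1]].
Proof.
rewrite /sdeg (cardsD1 e0) => d3.
have : 1 < #|[set e in F | incident x e] :\ e0| by move: d3; case: (_ \in _) => /= h; lia.
move=> gt1; have /card_gt0P[e1 e1F] := ltnW gt1; move: gt1.
rewrite (cardsD1 e1) e1F => /card_gt0P[e2]; rewrite !inE in e1F *.
by case/and3P: e1F => ? ? ?; case/and4P=> ? ? ? ?; exists e1, e2.
Qed.

Lemma handshake F : \sum_v sdeg F v = 2 * #|F|.
Proof.
under eq_bigr do rewrite sdegE.
rewrite exchange_big /= (eq_bigr (fun e => 2 * (e \in F))) => [|e _].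
  by rewrite -big_distrr -sum1_card [in RHS]big_mkcond.
have ends : #|[set v | incident v e]| = 2.
  have -> : [set v | incident v e] = [set src e; dst e].
    by apply/setP => v; rewrite !inE /Defs.incident ![_ == v]eq_sym.
  by rewrite cards2 loopless.
case: (e \in F); last by rewrite big1.
rewrite muln1 -ends -sum1_card [in RHS]big_mkcond.
by apply: eq_bigr => v _; rewrite inE.
Qed.

(* A walk from x is the list of its steps (edge, vertex reached); it is a path
   when wverts x s is duplicate-free.  Walks are grown at their start x, so
   that wend x s stays fixed. *)
Fixpoint walk F x s : bool :=
  if s is (e, y) :: s' then [&& e \in F, joins e x y & walk F y s'] else true.
Definition wverts x s := x :: map snd s.
Definition wedges s := [set e in map fst s].
Definition wend x s := last x (map snd s).

Lemma walk_cat F x t s : walk F x (t ++ s) = walk F x t && walk F (wend x t) s.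
Proof. by elim: t x => [|[e y] t IH] x //=; rewrite IH !andbA. Qed.

Lemma wverts_cat x t s : wverts x (t ++ s) = wverts x t ++ map snd s.
Proof. by rewrite /wverts map_cat. Qed.

Lemma wverts_cons x e y s : wverts x ((e, y) :: s) = x :: wverts y s.
Proof. by []. Qed.

Lemma wend_cons x e y s : wend x ((e, y) :: s) = wend y s.
Proof. by []. Qed.

Lemma wedges_cons e y s : wedges ((e, y) :: s) = e |: wedges s.
Proof. by apply/setP=> f; rewrite !inE. Qed.

Lemma walk_wedges F x s : walk F x s -> wedges s \subset F.
Proof.
elim: s x => [|[e y] s IH] x /=; first by move=> _; apply/subsetP=> f; rewrite inE.
by case/and3P=> eF _ /IH ws; rewrite wedges_cons subUset sub1set eF.
Qed.

Lemma walk_incident F x s e v :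
  walk F x s -> e \in map fst s -> incident v e -> v \in wverts x s.
Proof.
elim: s x => [|[f y] s IH] x //= /and3P[_ jf ws].
rewrite wverts_cons in_cons => /orP[/eqP-> | es] ie; rewrite in_cons.
  by rewrite (joins_incident _ jf) in ie; case/orP: ie => [->|/eqP->] //; rewrite mem_head orbT.
by rewrite (IH _ ws es ie) orbT.
Qed.

Lemma path_edge_fresh F x e y s :
  walk F x ((e, y) :: s) -> uniq (wverts x ((e, y) :: s)) -> e \notin map fst s.
Proof.
case/and3P=> _ je ws /andP[xs _]; apply: contra xs => es.
by apply: walk_incident ws es _; rewrite (joins_incident _ je) eqxx.
Qed.

Lemma path_uniq_edges F x s : walk F x s -> uniq (wverts x s) -> uniq (map fst s).
Proof.
elim: s x => [|[e y] s IH] x //= ws us; rewrite (path_edge_fresh ws us).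
by case/and3P: ws => _ _ /IH -> //; case/andP: us.
Qed.

Lemma path_prefix F x t s : walk F x (t ++ s) -> uniq (wverts x (t ++ s)) ->
  [/\ walk F x t, uniq (wverts x t) & {subset wverts x t <= wverts x (t ++ s)}].
Proof.
rewrite walk_cat wverts_cat cat_uniq => /andP[wt _] /andP[ut _].
by split=> // v vt; rewrite mem_cat vt.
Qed.

Lemma path_sdeg F x s v : walk F x s -> uniq (wverts x s) ->
  sdeg (wedges s) v + (v == x) + (v == wend x s) = 2 * (v \in wverts x s).
Proof.
elim: s x => [|[e y] s IH] x ws us.
  have -> : wedges [::] = set0 by apply/setP=> f; rewrite !inE.
  by rewrite sdeg0 /wend /wverts inE; case: (v == x).
have en : e \notin wedges s by rewrite inE (path_edge_fresh ws us).
rewrite wverts_cons cons_uniq in us; case/andP: us => xs us.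
rewrite /= in ws; case/and3P: ws => _ je ws.
rewrite wedges_cons sdegU1 // (joins_incident _ je) wend_cons wverts_cons in_cons.
have xy : (x == y) = false by apply: contraNF xs => /eqP->; apply: mem_head.
have xw : (x == wend y s) = false by apply: contraNF xs => /eqP->; apply: mem_last.
case: (eqVneq v x) => [vx | _] /=; last by rewrite addn0 IH.
by move: (IH y ws us); rewrite vx xy xw (negbTE xs) !addn0 => ->.
Qed.

Lemma walk_nth F x s i e0 v0 : walk F x s -> i < size s ->
  joins (nth e0 (map fst s) i) (nth v0 (wverts x s) i) (nth v0 (wverts x s) i.+1).
Proof.
elim: s x i => [|[e y] s IH] x [|i] //= /and3P[_ je ws] lti //.
exact: IH ws lti.
Qed.

Lemma path_close_cycle F x s e : walk F x s -> uniq (wverts x s) -> s != [::] ->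
  e \notin wedges s -> joins e (wend x s) x -> is_cycle src dst (e |: wedges s).
Proof.
move=> ws us sn en je.
pose es := rcons (map fst s) e.
have szs : size es = (size s).+1 by rewrite size_rcons size_map.
have szv : size (wverts x s) = (size s).+1 by rewrite /= size_map.
exists (size s).+1, (fun i => nth x (wverts x s) i), (fun i => nth e es i); split.
- by rewrite ltnS lt0n size_eq0.
- by move=> i j /eqP; rewrite nth_uniq ?szv // => /eqP /val_inj.
- have ues : uniq es by rewrite rcons_uniq (path_uniq_edges ws us) andbT; rewrite inE in en.
  by move=> i j /eqP; rewrite nth_uniq ?szs // => /eqP /val_inj.
- move=> i; rewrite /ordS /=; have := ltn_ord i; rewrite ltnS leq_eqVlt.
  case/orP=> [/eqP iE | lti].
    rewrite iE modnn nth_rcons size_map ltnn eqxx /=.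
    by rewrite /wend (last_nth x) size_map in je.
  by rewrite modn_small // nth_rcons size_map lti (walk_nth _ _ ws).
- by rewrite (imset_nth e szs); apply/setP=> f; rewrite !inE mem_rcons in_cons.
Qed.

Lemma path_close_sdeg F x s e v : walk F x s -> uniq (wverts x s) ->
  e \notin wedges s -> joins e (wend x s) x ->
  sdeg (e |: wedges s) v = 2 * (v \in wverts x s).
Proof.
move=> ws us en je; rewrite sdegU1 // (joins_incident _ je) -(path_sdeg v ws us).
case: (eqVneq v (wend x s)) => [-> | _]; last by rewrite addn0.
by rewrite (negbTE (joins_neq je)) addn0.
Qed.

Lemma vset_double C (P : pred V) v :
  (forall v, sdeg C v = 2 * P v) -> (v \in vset C) = P v.
Proof. by move=> h; rewrite inE h; case: (P v). Qed.

Lemma two_regular_double C (P : pred V) :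
  (forall v, sdeg C v = 2 * P v) -> two_regular C.
Proof. by move=> h v; rewrite h (vset_double _ h). Qed.

Definition subcycle F C := [/\ C \subset F, is_cycle src dst C & two_regular C].

Lemma close_cycle F x e0 y s e z :
  walk F x ((e0, y) :: s) -> uniq (wverts x ((e0, y) :: s)) ->
  e \in F -> e != e0 -> joins e x z -> z \in wverts y s ->
  exists2 C, subcycle F C & {subset vset C <= wverts x ((e0, y) :: s)}.
Proof.
move=> ws us eF ne je zs; have /and3P[_ je0 _] := ws.
have [p ps zp] : exists2 p, p \in (e0, y) :: s & z = p.2 by apply/mapP.
have [t [t' sE]] : exists t t', (e0, y) :: s = rcons t p ++ t'.
  by case/path.splitP: ps => t t'; exists t, t'.
rewrite sE in ws us *; have [wt ut tsub] := path_prefix ws us.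
have tz : wend x (rcons t p) = z by rewrite /wend map_rcons last_rcons zp.
have e0t : e0 \in wedges (rcons t p).
  have : (e0, y) \in rcons t p by case: (t) sE => [|q t''] [<- _]; rewrite /= mem_head.
  by rewrite inE => /(map_f fst).
have ie0 : incident x e0 by rewrite (joins_incident _ je0) eqxx.
have deg1 : sdeg (wedges (rcons t p)) x = 1.
  have := path_sdeg x wt ut; rewrite tz eqxx (negbTE (joins_neq je)) mem_head /=; lia.
have en : e \notin wedges (rcons t p).
  apply: contra ne => et.
  by rewrite (sdeg1_uniq deg1 e0t ie0 et) // (joins_incident _ je) eqxx.
have jzx : joins e (wend x (rcons t p)) x by rewrite tz joins_sym.
have dC v := path_close_sdeg v wt ut en jzx.
exists (e |: wedges (rcons t p)); last by move=> v; rewrite (vset_double _ dC); apply: tsub.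
split; last exact: two_regular_double dC.
  by rewrite subUset sub1set eF (walk_wedges wt).
by apply: path_close_cycle wt ut _ en jzx; case: (t).
Qed.

Definition no_backtrack s e := if s is (e0, _) :: _ then e != e0 else true.

Lemma extend_or_close F x s e :
  walk F x s -> uniq (wverts x s) -> e \in F -> incident x e -> no_backtrack s e ->
  (exists2 C, subcycle F C & {subset vset C <= wverts x s}) \/
  (exists z, walk F z ((e, x) :: s) && uniq (wverts z ((e, x) :: s))).
Proof.
move=> ws us eF /incident_joins[z je] nb.
case zs: (z \in map snd s).
  left; case: s ws us nb zs => [|[e0 y] s] // ws us nb zs.
  exact: close_cycle ws us eF nb je zs.
right; exists z; rewrite wverts_cons cons_uniq us andbT /= eF joins_sym je ws.
by rewrite in_cons zs orbF eq_sym (joins_neq je).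
Qed.

Lemma path_size_lt x s : uniq (wverts x s) -> size s < #|V|.
Proof. by move/uniq_size_le_card; rewrite /= size_map. Qed.

Lemma pruned_sdeg_gt1 F x e : pruned F -> e \in F -> incident x e -> 1 < sdeg F x.
Proof. by move=> pF eF ie; have := pF x; have := sdeg_gt0 eF ie; case: (sdeg F x) => [|[]]. Qed.

Lemma pruned_path_cycle W x s : pruned W ->
  walk W x s -> uniq (wverts x s) -> s != [::] -> exists C, subcycle W C.
Proof.
move=> pW; have [n] := ubnP (#|V| - size s); elim: n x s => // n IH x s hn.
case: s hn => [|[e0 y] s] // hn ws us _; have /and3P[e0W je0 _] := ws.
have ie0 : incident x e0 by rewrite (joins_incident _ je0) eqxx.
have [e [eW ie ne]] := pick_edge e0 (pruned_sdeg_gt1 pW e0W ie0).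
case: (extend_or_close ws us eW ie ne) => [[C ? _] | [z /andP[wz uz]]]; first by exists C.
by apply: (IH z _ _ wz uz); rewrite // ltn_subS // ltnW // (path_size_lt uz).
Qed.

Lemma pruned_cycle W : W != set0 -> pruned W -> exists C, subcycle W C.
Proof.
case/set0Pn=> e eW pW; apply: (pruned_path_cycle (x := dst e) (s := [:: (e, src e)])) => //=.
  by rewrite eW /Defs.joins !eqxx orbT.
by rewrite inE eq_sym loopless.
Qed.

Lemma cycle_neq0 C : is_cycle src dst C -> C != set0.
Proof.
case=> l [vs [es [l2 _ _ _ ->]]]; apply/set0Pn.
by exists (es (Ordinal (ltnW l2))); apply: imset_f.
Qed.

Lemma two_regular_even C : two_regular C -> even_edges C.
Proof. by move=> h; apply/forallP=> v; rewrite h mul2n odd_double. Qed.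

Lemma vset_wedges F x s : walk F x s -> {subset vset (wedges s) <= wverts x s}.
Proof.
move=> ws v; rewrite inE => /card_gt0P[e]; rewrite !inE => /andP[es ie].
exact: walk_incident ws es ie.
Qed.

Definition nbranch F x s := #|[set v in branch F | v \in wverts x s]|.

Definition short_even F Q W :=
  [&& W \subset F, W != set0, even_edges W & #|branch F :&: vset W| <= Q].

Definition no_short_even F Q := forall W, ~~ short_even F Q W.

Lemma no_short_evenP F Q W : no_short_even F Q ->
  W \subset F -> W != set0 -> even_edges W -> Q < #|branch F :&: vset W|.
Proof. by move=> /(_ W) + WF Wn eW; rewrite /short_even WF Wn eW ltnNge. Qed.

Lemma nbranch_cons F z e x s : z \notin wverts x s ->
  nbranch F z ((e, x) :: s) = (z \in branch F) + nbranch F x s.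
Proof.
move=> zn; rewrite /nbranch wverts_cons; case zB: (z \in branch F); rewrite inE in zB.
  rewrite (_ : [set v in _ | _] = z |: [set v in branch F | v \in wverts x s]).
    by rewrite cardsU1 inE (negbTE zn) andbF.
  by apply/setP=> v; rewrite !inE; case: eqVneq => [->|] //=; rewrite zB.
by rewrite add0n; apply: eq_card => v; rewrite !inE; case: eqVneq => [->|] //=; rewrite zB.
Qed.

Lemma no_short_extend F Q x s e : no_short_even F Q ->
  walk F x s -> uniq (wverts x s) -> e \in F -> incident x e -> no_backtrack s e ->
  nbranch F x s <= Q ->
  exists z, walk F z ((e, x) :: s) && uniq (wverts z ((e, x) :: s)).
Proof.
move=> NS ws us eF ie nb hQ.
case: (extend_or_close ws us eF ie nb) => // -[C [CF Ccyc Creg] Cs].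
have := no_short_evenP NS CF (cycle_neq0 Ccyc) (two_regular_even Creg).
rewrite ltnNge => /negP[]; apply: leq_trans hQ; apply: subset_leq_card.
by apply/subsetP => v; rewrite in_setI in_set => /andP[-> /Cs].
Qed.

Lemma extend_to_branch F Q x s e : pruned F -> no_short_even F Q ->
  walk F x s -> uniq (wverts x s) -> e \in F -> incident x e -> no_backtrack s e ->
  nbranch F x s <= Q ->
  exists t u, [/\ walk F u (t ++ (e, x) :: s), uniq (wverts u (t ++ (e, x) :: s)),
    u \in branch F & nbranch F u (t ++ (e, x) :: s) = (nbranch F x s).+1].
Proof.
move=> pF NS; have [n] := ubnP (#|V| - size s).
elim: n x s e => // n IH x s e hn ws us eF ie nb hQ.
have [z /andP[wz uz]] := no_short_extend NS ws us eF ie nb hQ.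
have zn : z \notin wverts x s by move: uz; rewrite wverts_cons cons_uniq => /andP[].
case zB: (z \in branch F); first by exists [::], z; rewrite nbranch_cons // zB.
have /and3P[_ jz _] := wz.
have iz : incident z e by rewrite (joins_incident _ jz) eqxx.
have [e' [e'F ie' ne']] := pick_edge e (pruned_sdeg_gt1 pF eF iz).
have hn' : #|V| - size ((e, x) :: s) < n by rewrite ltn_subS // ltnW // (path_size_lt uz).
have hQ' : nbranch F z ((e, x) :: s) <= Q by rewrite nbranch_cons // zB.
have [t [u [wu uu uB hu]]] := IH z _ e' hn' wz uz e'F ie' ne' hQ'.
by exists (rcons t (e', z)), u; rewrite cat_rcons hu nbranch_cons ?zB.
Qed.

Lemma path_wend_neq x s : uniq (wverts x s) -> s != [::] -> x != wend x s.
Proof.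
case: s => [|[e y] s] // /andP[xn _] _; apply: contraNneq xn => ->.
by rewrite /wend /= mem_last.
Qed.

Lemma path_split_at F u t e x s :
  walk F u (t ++ (e, x) :: s) -> uniq (wverts u (t ++ (e, x) :: s)) ->
  [/\ walk F u (rcons t (e, x)), uniq (wverts u (rcons t (e, x))),
      wend u (rcons t (e, x)) = x, incident x e & u != x].
Proof.
rewrite -cat_rcons => ws us; have [wt ut _] := path_prefix ws us.
have end_x : wend u (rcons t (e, x)) = x by rewrite /wend map_rcons last_rcons.
split=> //; last by rewrite -end_x path_wend_neq //; case: (t).
move: wt; rewrite -cats1 walk_cat => /andP[_] /= /andP[_ /andP[je _]].
by rewrite (joins_incident _ je) eqxx orbT.
Qed.

Lemma wverts_rcons_sub u t e x s :
  {subset wverts u (rcons t (e, x)) <= wverts u (t ++ (e, x) :: s)}.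
Proof. by rewrite -cat_rcons wverts_cat => v vt; rewrite mem_cat vt. Qed.

Lemma path_symdiff_even F u t1 t2 :
  walk F u t1 -> uniq (wverts u t1) -> walk F u t2 -> uniq (wverts u t2) ->
  wend u t1 = wend u t2 ->
  even_edges ((wedges t1 :\: wedges t2) :|: (wedges t2 :\: wedges t1)).
Proof.
move=> w1 u1 w2 u2 ends; apply/forallP=> v.
have := sdeg_symdiff (wedges t1) (wedges t2) v.
have := path_sdeg v w1 u1; have := path_sdeg v w2 u2; rewrite ends.
move: (sdeg (_ :|: _) v) (sdeg (_ :&: _) v) (sdeg (wedges t1) v) (sdeg (wedges t2) v).
move: (v == u) (v == wend u t2) (v \in wverts u t1) (v \in wverts u t2) => a b c d.
move=> w i d1 d2 h2 h1 h; suff /(congr1 odd) : w + 2 * (i + a + b) = 2 * (c + d).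
  by rewrite oddD !mul2n !odd_double addbF => ->.
lia.
Qed.

Lemma diverging_paths F Q u t1 t2 e1 e2 x s : no_short_even F Q -> e1 != e2 ->
  walk F u (t1 ++ (e1, x) :: s) -> uniq (wverts u (t1 ++ (e1, x) :: s)) ->
  walk F u (t2 ++ (e2, x) :: s) -> uniq (wverts u (t2 ++ (e2, x) :: s)) ->
  Q < nbranch F u (t1 ++ (e1, x) :: s) + nbranch F u (t2 ++ (e2, x) :: s).
Proof.
move=> NS ne p1 q1 p2 q2.
have [w1 v1 end1 ie1 _] := path_split_at p1 q1.
have [w2 v2 end2 ie2 ux] := path_split_at p2 q2.
(* The two u-x paths enter x by different edges, so their symmetric difference
   is a nonempty even subgraph. *)
have eW := path_symdiff_even w1 v1 w2 v2 (etrans end1 (esym end2)).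
have dDx : sdeg (wedges (rcons t2 (e2, x))) x = 1.
  have := path_sdeg x w2 v2; rewrite end2 eqxx eq_sym (negbTE ux).
  by rewrite /wverts map_rcons in_cons mem_rcons mem_head orbT /= addn0 addn1 => -[].
set A := wedges (rcons t1 (e1, x)) in eW *; set D := wedges (rcons t2 (e2, x)) in eW dDx *.
have WF : (A :\: D) :|: (D :\: A) \subset F.
  by rewrite subUset !(subset_trans (subsetDl _ _)) ?(walk_wedges w1) ?(walk_wedges w2).
have e1D : e1 \notin D.
  apply: contra ne => e1D; rewrite (sdeg1_uniq dDx _ ie2 e1D ie1) //.
  by rewrite inE map_rcons mem_rcons mem_head.
have Wn : (A :\: D) :|: (D :\: A) != set0.
  by apply/set0Pn; exists e1; rewrite in_setU in_setD e1D inE map_rcons mem_rcons mem_head.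
apply: leq_trans (no_short_evenP NS WF Wn eW) _.
apply: leq_trans (leq_card_setU _ _).1; apply: subset_leq_card.
apply/subsetP=> v; rewrite in_setI => /andP[vB vW]; rewrite in_setU !in_set.
have : (v \in vset A) || (v \in vset D).
  by move: vW; rewrite !inE -addn_gt0 -(sdeg_symdiff A D) addn_gt0 => ->.
rewrite in_set in vB; case/orP=> [/(vset_wedges w1) | /(vset_wedges w2)] vt.
  by rewrite vB (wverts_rcons_sub _ vt).
by rewrite vB (wverts_rcons_sub _ vt) orbT.
Qed.

Lemma pick_branch_edges F x s : 2 < sdeg F x ->
  exists e1 e2, [/\ e1 \in F, incident x e1, no_backtrack s e1, e2 \in F
                  & [/\ incident x e2, no_backtrack s e2 & e1 != e2]].
Proof.
move=> x3; have /card_gt0P[g _] : 0 < sdeg F x by apply: leq_trans x3.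
pose e0 := if s is (f, _) :: _ then f else g.
have nb e : e != e0 -> no_backtrack s e by rewrite /e0; case: (s) => [|[]].
have [e1 [e2 [? ? n1 ? [? n2 n12]]]] := pick_edge2 e0 x3.
by exists e1, e2; split; rewrite ?nb // eq_sym.
Qed.

Definition reaches F r s u :=
  exists t, [/\ walk F u (t ++ s), uniq (wverts u (t ++ s)) & nbranch F u (t ++ s) <= r].

Lemma branch_tree F Q r d x s : pruned F -> no_short_even F Q -> 2 * r <= Q ->
  walk F x s -> uniq (wverts x s) -> x \in branch F -> nbranch F x s + d <= r ->
  exists S : {set V},
    [/\ S \subset branch F, 2 ^ d <= #|S| & {in S, forall u, reaches F r s u}].
Proof.
move=> pF NS hQ; elim: d x s => [|d IH] x s ws us xB hr.
  exists [set x]; split; rewrite ?sub1set ?cards1 // => u /set1P->.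
  by exists [::]; rewrite addn0 in hr.
have x3 : 2 < sdeg F x by rewrite inE in xB.
have [e1 [e2 [e1F ie1 nb1 e2F [ie2 nb2 ne]]]] := pick_branch_edges s x3.
have hQ' : nbranch F x s <= Q by lia.
have [t1 [u1 [w1 v1 u1B h1]]] := extend_to_branch pF NS ws us e1F ie1 nb1 hQ'.
have [t2 [u2 [w2 v2 u2B h2]]] := extend_to_branch pF NS ws us e2F ie2 nb2 hQ'.
have hr1 : nbranch F u1 (t1 ++ (e1, x) :: s) + d <= r by rewrite h1 addSnnS.
have hr2 : nbranch F u2 (t2 ++ (e2, x) :: s) + d <= r by rewrite h2 addSnnS.
have [S1 [S1B c1 r1]] := IH _ _ w1 v1 u1B hr1.
have [S2 [S2B c2 r2]] := IH _ _ w2 v2 u2B hr2.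
(* A common leaf would have two paths to the root that diverge at x. *)
have dis : [disjoint S1 & S2].
  apply/pred0P => v /=; apply/negP => /andP[/r1[ta [wa ua ha]] /r2[tb [wb ub hb]]].
  rewrite catA in wa ua ha; rewrite catA in wb ub hb.
  have := diverging_paths NS ne wa ua wb ub; rewrite ltnNge => /negP; apply.
  by apply: leq_trans hQ; rewrite mul2n -addnn leq_add.
exists (S1 :|: S2); split.
- by rewrite subUset S1B S2B.
- by rewrite cardsU (disjoint_setI0 dis) cards0 subn0 expnS mul2n -addnn leq_add.
- move=> u /setUP[/r1 | /r2] [t [wt ut ht]].
  + by exists (t ++ t1 ++ [:: (e1, x)]); rewrite -!catA.
  + by exists (t ++ t2 ++ [:: (e2, x)]); rewrite -!catA.
Qed.

Lemma moore_bound F r : pruned F -> F != set0 -> 0 < r -> no_short_even F (2 * r) ->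
  2 ^ r.-1 <= #|branch F|.
Proof.
move=> pF Fn r0 NS; case: (set_0Vmem (branch F)) => [B0 | [v vB]].
  have eF : even_edges F.
    apply/forallP=> v; have := pF v; have : v \notin branch F by rewrite B0 inE.
    by rewrite inE -leqNgt; case: (sdeg F v) => [|[|[|]]].
  by have := no_short_evenP NS (subxx F) Fn eF; rewrite B0 set0I cards0.
have nb1 : nbranch F v [::] = 1.
  rewrite /nbranch (_ : [set w in branch F | w \in wverts v [::]] = [set v]) ?cards1 //.
  apply/setP=> w; rewrite in_set1 in_set /wverts /= mem_seq1.
  by apply: andb_idl => /eqP->.
have [|S [SB cS _]] := branch_tree (d := r.-1) pF NS (leqnn _) (isT : walk F v [::]) isT vB.
  by rewrite nb1 add1n prednK.
exact: leq_trans cS (subset_leq_card SB).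
Qed.

Lemma exists_short_even F r : pruned F -> F != set0 -> 0 < r ->
  #|branch F| < 2 ^ r.-1 -> exists W, short_even F (2 * r) W.
Proof.
move=> pF Fn r0 hB; case: (pickP (short_even F (2 * r))) => [W hW | none].
  by exists W.
by move: hB; rewrite ltnNge moore_bound // => W; rewrite none.
Qed.

(* The excess |F| - |vset F| is compared additively, avoiding truncated
   subtraction. *)
Lemma prune F : exists F', [/\ F' \subset F, pruned F' & #|F| + #|vset F'| <= #|F'| + #|vset F|].
Proof.
have [n] := ubnP #|F|; elim: n F => // n IH F hF.
case: (pickP (fun v => sdeg F v == 1)) => [v /eqP d1 | none]; last first.
  by exists F; split=> // v; rewrite none.
have /card_gt0P[e] : 0 < sdeg F v by rewrite d1.
rewrite inE => /andP[eF ie].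
have cF : #|F| = #|F :\ e|.+1 by rewrite (cardsD1 e F) eF.
have vF : #|vset (F :\ e)| < #|vset F|.
  rewrite (cardsD1 v (vset F)) inE d1 ltnS; apply/subset_leq_card/subsetP=> w.
  rewrite in_setD1 !inE => w0; rewrite (leq_trans w0) ?sdegS ?subsetDl // andbT.
  apply: contraTneq w0 => ->; have e1F : [set e] \subset F by rewrite sub1set.
  move: (sdeg_setD v e1F); rewrite sdeg_set1 ie d1 => /eqP.
  by rewrite -{1}[1]addn0 eqn_add2l eq_sym => /eqP->.
have [|F' [sF' pF' hF']] := IH (F :\ e); first by rewrite -ltnS -cF.
exists F'; split=> //; first exact: subset_trans sF' (subsetDl _ _).
by move: hF'; rewrite cF; lia.
Qed.

Lemma trim_excess m F : pruned F -> m + #|vset F| <= #|F| ->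
  exists F', [/\ F' \subset F, pruned F' & m + #|vset F'| = #|F'|].
Proof.
have [n] := ubnP #|F|; elim: n F => // n IH F hF pF hx.
case: (eqVneq (m + #|vset F|) #|F|) => [eq | neq]; first by exists F.
have lt : m + #|vset F| < #|F| by rewrite ltn_neqAle neq.
have /card_gt0P[e eF] : 0 < #|F| by apply: leq_trans lt.
have cF : #|F| = #|F :\ e|.+1 by rewrite (cardsD1 e F) eF.
have vF : #|vset (F :\ e)| <= #|vset F| by apply/subset_leq_card/vsetS/subsetDl.
have [F2 [s2 p2 h2]] := prune (F :\ e).
have c2 : #|F2| <= #|F :\ e| by apply: subset_leq_card.
have [||F' [s' p' h']] := IH F2 _ p2.
- by apply: leq_ltn_trans c2 _; rewrite -ltnS -cF.
- by move: h2 lt; rewrite cF; lia.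
by exists F'; split=> //; apply: subset_trans s' (subset_trans s2 (subsetDl _ _)).
Qed.

Lemma pruned_branch_card F : pruned F -> 2 * #|vset F| + #|branch F| <= 2 * #|F|.
Proof.
move=> pF; rewrite -handshake !card_sum big_distrr -big_split /=.
apply: leq_sum => v _; rewrite !inE; have := pF v.
by case: (sdeg F v) => [|[|[|d]]].
Qed.

Lemma two_regular_card C : two_regular C -> #|vset C| = #|C|.
Proof.
move=> h; apply/eqP; rewrite -(eqn_pmul2l (isT : 0 < 2)) -handshake card_sum.
by rewrite big_distrr; apply/eqP/eq_bigr => v _; rewrite h.
Qed.

Lemma vset_remove_cycle F C : C \subset F -> two_regular C ->
  #|vset C :\: branch F| + #|vset (F :\: C)| <= #|vset F|.
Proof.
move=> CF Creg.
(* A vertex of C that is not a branch vertex has both its F-edges in C. *)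
have dis : [disjoint vset C :\: branch F & vset (F :\: C)].
  apply/pred0P=> v /=; rewrite !inE (sdeg_setD v CF).
  have := Creg v; rewrite inE.
  case: (sdeg C v) => [|[|[|a]]] //= _; first by rewrite ltnn andbF.
  by case: (sdeg (F :\: C) v).
rewrite -cardsUI (disjoint_setI0 dis) cards0 addn0; apply/subset_leq_card.
by rewrite subUset (subset_trans (subsetDl _ _)) ?vsetS ?subsetDl.
Qed.

Lemma remove_cycle F m R : pruned F -> m + #|vset F| = #|F| -> 0 < m -> 0 < R ->
  2 * m < 2 ^ R.-1 ->
  exists C F', [/\ subcycle F C, F' \subset F :\: C, pruned F'
                 & m + #|vset F'| <= #|F'| + 2 * R].
Proof.
move=> pF hm m0 R0 hR.
have Fn : F != set0 by rewrite -card_gt0 -hm addn_gt0 m0.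
have hB : #|branch F| < 2 ^ R.-1.
  by apply: leq_ltn_trans hR; have := pruned_branch_card pF; rewrite -hm; lia.
have [W /and4P[WF Wn eW hW]] := exists_short_even pF Fn R0 hB.
have pW : pruned W by move=> v; apply: contraTneq (forallP eW v) => ->.
have [C [CW Ccyc Creg]] := pruned_cycle Wn pW.
have CF := subset_trans CW WF.
have [F' [sF' pF' hF']] := prune (F :\: C).
exists C, F'; split=> //.
have cD : #|F :\: C| + #|C| = #|F| by rewrite cardsD (setIidPr CF) subnK // subset_leq_card.
have hBC : #|vset C :&: branch F| <= 2 * R.
  by rewrite setIC; apply: leq_trans hW; apply/subset_leq_card/setIS/vsetS.
have := vset_remove_cycle CF Creg; have := cardsID (branch F) (vset C).
rewrite (two_regular_card Creg); lia.
Qed.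

Lemma disjoint_cycles R j F : 0 < R -> pruned F ->
  1 + j * (2 * R) + #|vset F| <= #|F| -> 2 * (1 + j * (2 * R)) < 2 ^ R.-1 ->
  exists cs : seq {set E}, [/\ size cs = j.+1, {in cs, forall C, subcycle F C}
                             & pairwise (fun A B : {set E} => [disjoint A & B]) cs].
Proof.
move=> R0; elim: j F => [|j IH] F pF hF hR; have [F0 [s0 p0 h0]] := trim_excess pF hF;
  have [C [F' [[CF0 Ccyc Creg] sF' pF' hF']]] := remove_cycle p0 h0 isT R0 hR;
  have CF := subset_trans CF0 s0.
  by exists [:: C]; split=> // D; rewrite inE => /eqP->.
have [||cs [sz hcs pcs]] := IH F' pF'; try by move: hR hF'; rewrite mulSn; lia.
have F'F : F' \subset F.
  by apply: subset_trans sF' (subset_trans (subsetDl _ _) s0).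
exists (C :: cs); split=> /=; first by rewrite sz.
  move=> D; rewrite in_cons => /orP[/eqP-> | /hcs[DF' ? ?]] //.
  by split=> //; apply: subset_trans DF' F'F.
rewrite pcs andbT; apply/allP=> D /hcs[DF' _ _].
rewrite disjoint_sym disjoints_subset; apply: subset_trans DF' (subset_trans sF' _).
by apply/subsetP=> e; rewrite !inE => /andP[].
Qed.

Lemma sdeg_setT v : sdeg setT v = deg src dst v.
Proof. by apply: eq_card => e; rewrite !inE. Qed.

End Multigraph.

Lemma linear_le_exp2 p : 2 * p + 7 <= 8 * 2 ^ p.
Proof.
elim: p => [|p IH] //; have : 0 < 2 ^ p by rewrite expn_gt0.
by rewrite expnS; lia.
Qed.

Lemma radius_bounds k p nE nV : 0 < nV -> 2 ^ p <= k < 2 ^ p.+1 ->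
  42 * k * p <= nE -> 3 * nV <= 2 * nE ->
  1 + k.-1 * (2 * (2 * p + 7)) + nV <= nE /\
  2 * (1 + k.-1 * (2 * (2 * p + 7))) < 2 ^ (2 * p + 7).-1.
Proof.
move=> nV0 /andP[lo hi] hE hV; rewrite expnS in hi.
have a1 : 0 < 2 ^ p by rewrite expn_gt0.
have lin := linear_le_exp2 p.
have -> : 2 ^ (2 * p + 7).-1 = 64 * (2 ^ p * 2 ^ p).
  by rewrite addnS /= expnD mulnC mul2n -addnn expnD.
split; last by nia.
case: p lo hi hE {lin a1} => [|[|p]] lo hi hE; try nia.
Qed.

From Stdlib Require Import Reals Lra.

Lemma INR_expn2 p : INR (expn 2 p) = (2 ^ p)%R.
Proof. by elim: p => [|p IH] //; rewrite expnS mulnE mult_INR IH /=; lra. Qed.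

Lemma trunc_log_le_log2 k : 0 < k -> (INR (trunc_log 2 k) <= log2 (INR k))%R.
Proof.
move=> k0; set p := trunc_log 2 k.
have l2 : (0 < ln 2)%R by rewrite -ln_1; apply: ln_increasing; lra.
have hk : (2 ^ p <= INR k)%R by rewrite -INR_expn2; apply/le_INR/leP/trunc_logP.
have hln : (INR p * ln 2 <= ln (INR k))%R.
  rewrite -ln_pow; last lra.
  case: (Rle_lt_or_eq_dec _ _ hk) => [lt | ->]; last lra.
  by apply/Rlt_le/ln_increasing => //; apply: pow_lt; lra.
apply: (Rmult_le_reg_r (ln 2)) => //.
by rewrite /log2 /Rdiv Rmult_assoc Rinv_l; lra.
Qed.

Lemma edges_ge_nat n k : 0 < k -> (INR n >= 42 * INR k * log2 (INR k))%R ->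
  42 * k * trunc_log 2 k <= n.
Proof.
move=> k0 h; apply/leP/INR_le; rewrite !mulnE !mult_INR (_ : INR 42 = 42%R); last first.
  by rewrite INR_IZR_INZ.
have := trunc_log_le_log2 k0; have := pos_INR k; nra.
Qed.

Theorem lemma8 (V E : finType) (src dst : E -> V) (k : nat) :
  0 < k ->
  (forall e : E, src e != dst e) ->
  0 < #|V| ->
  (forall v : V, 3 <= deg src dst v) ->
  (INR #|E| >= 42 * INR k * log2 (INR k))%R ->
  exists Cs : 'I_k -> {set E},
    (forall i, is_cycle src dst (Cs i)) /\
    (forall i j, i != j -> [disjoint Cs i & Cs j]).
Proof.
move=> k0 loopless V0 d3 hE.
have pT : pruned src dst [set: E].
  by move=> v; rewrite sdeg_setT; have := d3 v; case: (deg _ _ v) => [|[|]].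
have vT : #|vset src dst [set: E]| = #|V|.
  by apply: eq_card => v; rewrite !inE sdeg_setT (leq_trans _ (d3 v)).
have h3 : 3 * #|V| <= 2 * #|E|.
  rewrite -(cardsT E) -(handshake loopless) mulnC -sum_nat_const.
  by apply: leq_sum => v _; rewrite sdeg_setT.
have [hF hR] := radius_bounds V0 (trunc_log_bounds (isT : 1 < 2) k0) (edges_ge_nat k0 hE) h3.
rewrite -vT -(cardsT E) in hF.
have R0 : 0 < 2 * trunc_log 2 k + 7 by rewrite addnS.
have [cs [sz hcs pcs]] := disjoint_cycles loopless R0 pT hF hR.
rewrite prednK // in sz; rewrite -sz.
by apply: nth_pairwise_disjoint pcs => C /hcs[].
Qed.
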